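(* Let $N^h\ge 2$ be an integer and $h=1/N^h$. Let $\lambda_j=j^2\pi^2$ be the $j$-th exact eigenvalue of $-u''=\lambda u$ on $(0,1)$ with $u(0)=u(1)=0$, and let $\lambda^h_{gs,j}$ be the $j$-th approximate eigenvalue (eigenvalues sorted in nondecreasing order, counting multiplicity) of the linear GSFEM generalized matrix eigenvalue problem $(\mathbf{K}-\eta_K\mathbf{S})\mathbf{U}=\lambda^h(\mathbf{M}+\eta_M\mathbf{S}_g)\mathbf{U}$ described in the context, with $\eta_K=\frac{1}{12}$ and $\eta_M=\frac{1}{360}$. Then \[ \frac{|\lambda^h_{gs,j}-\lambda_j|}{\lambda_j}<\frac{1}{3024}(j\pi h)^6\qquad\text{for all } j\in\{1,\dots,N^h-1\}. \]
   Context: Setting (linear finite elements, generalized SoftFEM, in 1D): Let $x_k=kh$, $k=0,\dots,N^h$, be a uniform mesh of $[0,1]$. Let $V^h$ be the space of continuous functions on $[0,1]$ that are affine on each $[x_{k-1},x_k]$ and vanish at $0$ and $1$, with hat basis $\phi_k$, $k=1,\dots,N^h-1$, $\phi_k(x_l)=\delta_{kl}$. For $v\in V^h$ and an interior node $x_k$ let $[\![v']\!](x_k)=v'(x_k^-)-v'(x_k^+)$. Define $a(v,w)=\int_0^1 v'w'\,dx$, $b(v,w)=\int_0^1 vw\,dx$, $s(v,w)=\sum_{k=1}^{N^h-1} h\,[\![v']\!](x_k)[\![w']\!](x_k)$, $s_g(v,w)=\sum_{k=1}^{N^h-1} h^3\,[\![v']\!](x_k)[\![w']\!](x_k)$, and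 the matrices $\mathbf{K}_{kl}=a(\phi_l,\phi_k)$, $\mathbf{M}_{kl}=b(\phi_l,\phi_k)$, $\mathbf{S}_{kl}=s(\phi_l,\phi_k)$, $(\mathbf{S}_g)_{kl}=s_g(\phi_l,\phi_k)$. Explicitly, $\mathbf{K}=\frac1h\,\mathrm{tridiag}(-1,2,-1)$, $\mathbf{M}=h\,\mathrm{tridiag}(\tfrac16,\tfrac23,\tfrac16)$, $\mathbf{S}=\frac1h$ times the symmetric pentadiagonal matrix with rows $(1,-4,6,-4,1)$ except that the first and last diagonal entries are $5$, and $\mathbf{S}_g=h^2\mathbf{S}$; all are $(N^h-1)\times(N^h-1)$. *)

From HB Require Import structures.
From mathcomp Require Import all_boot all_order all_algebra.
From mathcomp Require Import all_classical all_reals all_analysis.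
Set Implicit Arguments. Unset Strict Implicit. Unset Printing Implicit Defensive.
Import Order.TTheory GRing.Theory Num.Theory.
Local Open Scope ring_scope.

Section GSFEM.
Variable R : realType.
Variable N : nat.  (* N = N^h, the number of mesh intervals *)

(* number of interior nodes / degrees of freedom; index i : 'I_(N.-1)
   corresponds to the interior node x_{i+1} and hat function phi_{i+1} *)
Definition ndof := N.-1.
Definition meshh : R := (N%:R)^-1.

Definition tridiag (d o : R) (i j : 'I_ndof) : R :=
  if i == j :> nat then d
  else if (i.+1 == j :> nat) || (j.+1 == i :> nat) then o else 0.

(* stiffness K_{kl} = a(phi_l, phi_k) = (1/h) tridiag(-1,2,-1) *)
Definition Kmx : 'M[R]_ndof :=
  \matrix_(i, j) (meshh^-1 * tridiag 2 (-1) i j).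
(* mass M_{kl} = b(phi_l, phi_k) = h tridiag(1/6,2/3,1/6) *)
Definition Mmx : 'M[R]_ndof :=
  \matrix_(i, j) (meshh * tridiag (2/3) (1/6) i j).

(* jump [[phi_k']](x_m) = phi_k'(x_m^-) - phi_k'(x_m^+) at interior node m
   (m, k given as indices in 'I_ndof) *)
Definition jump (m k : 'I_ndof) : R := meshh^-1 * tridiag 2 (-1) m k.

(* S_{kl} = s(phi_l, phi_k) = sum_m h [[phi_l']](x_m) [[phi_k']](x_m) *)
Definition Smx : 'M[R]_ndof :=
  \matrix_(k, l) \sum_(m < ndof) meshh * jump m l * jump m k.
(* (S_g)_{kl} = s_g(phi_l, phi_k) = sum_m h^3 [[phi_l']](x_m) [[phi_k']](x_m) *)
Definition Sgmx : 'M[R]_ndof :=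
  \matrix_(k, l) \sum_(m < ndof) meshh ^+ 3 * jump m l * jump m k.

Definition etaK : R := 1 / 12.
Definition etaM : R := 1 / 360.

Definition Agsfem : 'M[R]_ndof := Kmx - etaK *: Smx.
Definition Bgsfem : 'M[R]_ndof := Mmx + etaM *: Sgmx.

Definition gsfem_charpoly : {poly R} :=
  \det (map_mx polyC Agsfem - 'X *: map_mx polyC Bgsfem).

Definition gsfem_sorted_eigenvalues (s : seq R) : Prop :=
  [/\ size s = ndof, sorted <=%R s, gsfem_charpoly != 0
    & gsfem_charpoly = lead_coef gsfem_charpoly *: \prod_(x <- s) ('X - x%:P)].

End GSFEM.

Definition exact_eig (R : realType) (j : nat) : R := (j%:R) ^+ 2 * pi ^+ 2.

(* The sine vectors [(sin (k theta_i))_k], [theta_i = (i+1) pi / N], diagonalize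
   the second-difference matrix [L = tridiag(-1, 2, -1)] with eigenvalues
   [mu_i = 2 - 2 cos theta_i].  The GSFEM matrices are polynomials in [L]:
   [K - S/12 = h^-1 (L - L^2/12)] and [M + S_g/360 = h (1 - L/6 + L^2/360)], so
   the pencil has the eigenvalues [h^-2 F(mu_i)] with
   [F(m) = (m - m^2/12) / (1 - m/6 + m^2/360)]; the sine matrix is invertible
   because eigenvectors of the symmetric [L] for distinct eigenvalues are
   orthogonal.  The bound [|F(2 - 2 cos t) - t^2| < t^8/3024] for
   [0 < t <= 16/5] (and [pi <= 16/5]) follows from the monotonicity of [F] on
   [[0, 5]] and the alternating Taylor bounds on [cos], which reduce it to the
   positivity of two explicit polynomials in [t^2]. *)

From HB Require Import structures.
From mathcomp Require Import all_boot all_order all_algebra.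
From mathcomp Require Import all_classical all_reals all_analysis.
From mathcomp Require Import ring lra zify.
Import Order.TTheory GRing.Theory Num.Theory.
Import numFieldNormedType.Exports.
Local Open Scope classical_set_scope.
Local Open Scope ring_scope.
Set Implicit Arguments. Unset Strict Implicit.

Section GsfemSymbol.
Variable R : realFieldType.

Definition stiff_symbol (m : R) := m - m ^+ 2 / 12.
Definition mass_symbol (m : R) := 1 - m / 6 + m ^+ 2 / 360.
Definition gsfem_symbol (m : R) := stiff_symbol m / mass_symbol m.

Definition stencil_taylor_lo (T : R) := T - T ^+ 2 / 12 + T ^+ 3 / 360 - T ^+ 4 / 20160.
Definition stencil_taylor_hi (T : R) := T - T ^+ 2 / 12 + T ^+ 3 / 360.

Lemma mass_symbol_gt0 m : 0 <= m -> m <= 5 -> 0 < mass_symbol m.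
Proof. by move=> m0 m5; have := sqr_ge0 m; rewrite /mass_symbol; lra. Qed.

Lemma gsfem_symbol_le x y : 0 <= x -> x <= y -> y <= 5 ->
  gsfem_symbol x <= gsfem_symbol y.
Proof.
move=> x0 xy y5; have mx := mass_symbol_gt0 x0 (le_trans xy y5).
have my := mass_symbol_gt0 (le_trans x0 xy) y5.
rewrite /gsfem_symbol ler_pdivrMr // mulrAC ler_pdivlMr // -subr_ge0.
have -> : stiff_symbol y * mass_symbol x - stiff_symbol x * mass_symbol y
    = (y - x) * ((1 - x / 12) * (1 - y / 12) + x * y / 240).
  by rewrite /stiff_symbol /mass_symbol; field.
have xy0 : 0 <= x * y by rewrite mulr_ge0 //; lra.
have p0 : 0 <= (1 - x / 12) * (1 - y / 12) by rewrite mulr_ge0 //; lra.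
by apply: mulr_ge0; lra.
Qed.

(* The polynomial inequalities below are proved by [lra] from these facts: a
   polynomial with positive Bernstein coefficients on [[a, b]] is a positive
   combination of the products [(T - a)^i (b - T)^j]. *)
Lemma bernstein_ge0 (c a b T : R) : 0 <= c -> a <= T -> T <= b ->
  forall i j, 0 <= c * ((T - a) ^+ i * (b - T) ^+ j).
Proof. by move=> c0 aT Tb i j; rewrite !mulr_ge0 ?exprn_ge0 ?subr_ge0. Qed.

Lemma stencil_taylor_range T : 0 <= T -> T <= 256 / 25 ->
  [/\ 0 <= stencil_taylor_lo T, stencil_taylor_lo T <= stencil_taylor_hi T
    & stencil_taylor_hi T <= 5].
Proof.
move=> T0 Tb; have b := bernstein_ge0 ler01 T0 Tb.
move: (b 0 4) (b 1 3) (b 2 2) (b 3 1) (b 4 0) (b 0 3) (b 1 2) (b 2 1) (b 3 0).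
rewrite /stencil_taylor_lo /stencil_taylor_hi !mul1r => *.
by split; lra.
Qed.

Lemma gsfem_symbol_taylor_lo T : 0 < T -> T <= 256 / 25 ->
  T - T ^+ 4 / 3024 < gsfem_symbol (stencil_taylor_lo T).
Proof.
move=> T0 Tb; have [lo0 lohi hi5] := stencil_taylor_range (ltW T0) Tb.
rewrite /gsfem_symbol ltr_pdivlMr ?mass_symbol_gt0 ?(le_trans lohi) //.
have T40 : 0 <= T ^+ 4 by rewrite exprn_ge0 ?ltW.
have T4 : 0 < T ^+ 4 by rewrite exprn_gt0.
rewrite /stiff_symbol /mass_symbol /stencil_taylor_lo.
case: (lerP T 8) => [T8|/ltW T8].
  have b := bernstein_ge0 T40 (ltW T0) T8.
  move: (b 0 8) (b 1 7) (b 2 6) (b 3 5) (b 4 4) (b 5 3) (b 6 2) (b 7 1) (b 8 0).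
  by move=> *; lra.
have b := bernstein_ge0 T40 T8 Tb.
move: (b 0 8) (b 1 7) (b 2 6) (b 3 5) (b 4 4) (b 5 3) (b 6 2) (b 7 1) (b 8 0).
by move=> *; lra.
Qed.

Lemma gsfem_symbol_taylor_hi T : 0 <= T -> T <= 256 / 25 ->
  gsfem_symbol (stencil_taylor_hi T) <= T.
Proof.
move=> T0 Tb; have [lo0 lohi hi5] := stencil_taylor_range T0 Tb.
rewrite /gsfem_symbol ler_pdivrMr ?mass_symbol_gt0 ?(le_trans lo0) //.
have b := bernstein_ge0 (exprn_ge0 4 T0) T0 Tb.
move: (b 0 3) (b 1 2) (b 2 1) (b 3 0).
by rewrite /stiff_symbol /mass_symbol /stencil_taylor_hi => *; lra.
Qed.

End GsfemSymbol.

Section StencilSymbol.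
Variable R : realType.

(* The terms of the cosine series alternate and decrease in absolute value once
   [x ^+ 2 < (2n+1)(2n+2)], so the remainder has the sign of its first term. *)
Lemma cos_remainder_sign (n : nat) (x : R) : 0 < x ->
  x ^+ 2 < (n.*2.+1 * n.*2.+2)%:R ->
  0 < (-1) ^+ n * (cos x - \sum_(0 <= i < n) cos_coeff' x i).
Proof.
move=> x0 xn.
pose g i := (-1) ^+ n * cos_coeff' x i.
have g_cvg : series g @ \oo --> (-1) ^+ n * cos x.
  have -> : series g = (fun k => (-1) ^+ n * series (cos_coeff' x) k).
    by apply/funext => k; rewrite /series /= mulr_sumr.
  by apply: cvgM; [exact: cvg_cst | exact: cvg_cos_coeff'].
have := @lt_sum_lim_series R g n (cvgP _ g_cvg).
rewrite (cvg_lim (@Rhausdorff R) g_cvg) -mulr_sumr -subr_gt0 -mulrBr; apply.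
move=> d; rewrite addnS.
set m := (n + d.*2)%N.
have even_nm : ~~ odd (n + m) by rewrite /m addnA addnn oddD !odd_double.
have hc : x ^+ 2 < (m.*2.+1 * m.*2.+2)%:R.
  by apply: (lt_le_trans xn); rewrite ler_nat leq_mul // !ltnS leq_double leq_addr.
have A0 : 0 < x ^+ m.*2 / (m.*2)`!%:R by rewrite divr_gt0 ?exprn_gt0 ?ltr0n ?fact_gt0.
have c0 : 0 < (m.*2.+1 * m.*2.+2)%:R :> R by rewrite ltr0n muln_gt0.
have -> : g m + g m.+1 = (-1) ^+ (n + m) * (x ^+ m.*2 / (m.*2)`!%:R)
    * (1 - x ^+ 2 / (m.*2.+1 * m.*2.+2)%:R).
  rewrite /g /cos_coeff' -!exprnP doubleS !factS exprD !exprS !natrM; field.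
  by rewrite -[2 + _]natrD nat1r !pnatr_eq0 -!lt0n addn_gt0 fact_gt0.
by rewrite -signr_odd (negbTE even_nm) expr0 mul1r mulr_gt0 // subr_gt0 ltr_pdivrMr // mul1r.
Qed.

Definition stencil_symbol (x : R) := 2 - 2 * cos x.

Lemma stencil_symbol_bounds x : 0 < x -> x ^+ 2 < 90 ->
  stencil_taylor_lo (x ^+ 2) <= stencil_symbol x <= stencil_taylor_hi (x ^+ 2).
Proof.
move=> x0 x90.
have x132 : x ^+ 2 < 132 by lra.
have := cos_remainder_sign (n := 4) x0 x90.
have := cos_remainder_sign (n := 5) x0 x132.
rewrite !big_nat_recr //= big_geq // /cos_coeff' -!exprnP.
rewrite /stencil_symbol /stencil_taylor_lo /stencil_taylor_hi.
rewrite !doubleS double0 !factS fact0 !natrM.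
move=> *; lra.
Qed.

Lemma pi_le_16_5 : pi <= 16 / 5 :> R.
Proof.
rewrite leNgt; apply/negP => pi_gt.
have cos_gt0 : 0 < cos (8 / 5 : R).
  by apply: cos_gt0_pihalf; apply/andP; split; lra.
have /andP[+ _] := @stencil_symbol_bounds (8 / 5) ltac:(lra) ltac:(lra).
rewrite /stencil_symbol /stencil_taylor_lo; lra.
Qed.

Lemma gsfem_symbol_error t : 0 < t -> t <= 16 / 5 ->
  `|gsfem_symbol (stencil_symbol t) - t ^+ 2| < t ^+ 8 / 3024.
Proof.
move=> t0 t16; have T0 : 0 < t ^+ 2 by rewrite exprn_gt0.
have Tb : t ^+ 2 <= 256 / 25 by rewrite expr2; nra.
have T90 : t ^+ 2 < 90 by lra.
have /andP[lo_m m_hi] := stencil_symbol_bounds t0 T90.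
have [lo0 lohi hi5] := stencil_taylor_range (ltW T0) Tb.
have F_lo := gsfem_symbol_le lo0 lo_m (le_trans m_hi hi5).
have F_hi := gsfem_symbol_le (le_trans lo0 lo_m) m_hi hi5.
have := gsfem_symbol_taylor_lo T0 Tb; have := gsfem_symbol_taylor_hi (ltW T0) Tb.
rewrite -exprM ltr_distl => *; apply/andP; split; lra.
Qed.

Lemma stencil_symbol_range x : 0 <= stencil_symbol x <= 4.
Proof. by have := cos_le1 x; have := cos_geN1 x; rewrite /stencil_symbol => *; lra. Qed.

Lemma mass_symbol_stencil_gt0 x : 0 < mass_symbol (stencil_symbol x).
Proof. by have /andP[m0 m4] := stencil_symbol_range x; apply: mass_symbol_gt0 => //; lra. Qed.

End StencilSymbol.

Section Diagonalization.
Variables (F : idomainType) (n : nat).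
Implicit Types (L V : 'M[F]_n) (d : 'I_n -> F).

Lemma quad_mx_diag L V d (a b c : F) : L *m V = V *m diag_mx (\row_i d i) ->
  (a%:M + b *: L + c *: (L *m L)) *m V
    = V *m diag_mx (\row_i (a + b * d i + c * d i ^+ 2)).
Proof.
move=> LV; rewrite !mulmxDl -!scalemxAl -mulmxA !LV mulmxA LV mul_scalar_mx.
by apply/matrixP => k i; rewrite !mul_mx_diag !mxE; ring.
Qed.

Lemma sym_eigvec_orthogonal L V d : L^T = L ->
  L *m V = V *m diag_mx (\row_i d i) -> injective d ->
  forall i j, i != j -> (V^T *m V) i j = 0.
Proof.
move=> Lsym LV d_inj i j ij.
set D := diag_mx _ in LV.
have comm : D *m (V^T *m V) = (V^T *m V) *m D.
  have DVt : D *m V^T = V^T *m L by rewrite -[D]tr_diag_mx -trmx_mul -LV trmx_mul Lsym.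
  by rewrite mulmxA DVt -!mulmxA LV.
move/matrixP/(_ i j): comm; rewrite mul_diag_mx mul_mx_diag !mxE => /eqP.
rewrite mulrC -subr_eq0 -mulrBr mulf_eq0 subr_eq0 => /orP[/eqP // | /eqP dij].
by rewrite (d_inj _ _ dij) eqxx in ij.
Qed.

Lemma det_pencil_diag (A B V : 'M[F]_n) (a b : 'I_n -> F) : \det V != 0 ->
  A *m V = V *m diag_mx (\row_i a i) -> B *m V = V *m diag_mx (\row_i b i) ->
  \det (map_mx polyC A - 'X *: map_mx polyC B)
    = \prod_i ((a i)%:P - 'X * (b i)%:P).
Proof.
move=> detV AV BV; apply: (@mulIf _ (\det (map_mx polyC V))).
  by rewrite det_map_mx polyC_eq0.
rewrite -det_mulmx mulmxBl -scalemxAl -!map_mxM AV BV !map_mxM scalemxAr -mulmxBr.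
rewrite det_mulmx mulrC; congr (_ * _); rewrite !map_diag_mx.
rewrite -[X in \det X](_ : diag_mx (\row_i ((a i)%:P - 'X * (b i)%:P)) = _).
  by rewrite det_diag; apply: eq_bigr => i _; rewrite mxE.
apply/matrixP => p q; rewrite !mxE.
by case: eqP; rewrite ?mulr1n ?mulr0n ?polyC0 ?mulr0 ?subr0.
Qed.

End Diagonalization.

Lemma det_neq0_of_orthogonal (R : realDomainType) n (V : 'M[R]_n) :
  (forall i j, i != j -> (V^T *m V) i j = 0) -> (forall i, exists k, V k i != 0) ->
  \det V != 0.
Proof.
move=> orth col_nz.
have gram_diag : V^T *m V = diag_mx (\row_i (V^T *m V) i i).
  apply/matrixP => i j; rewrite 2![in RHS]mxE.
  have [<-|ij] := eqVneq i j; first by rewrite mulr1n.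
  by rewrite mulr0n orth.
have gram_pos i : 0 < (V^T *m V) i i.
  have [k Vk] := col_nz i.
  have sq_ge0 l : 0 <= V^T i l * V l i by rewrite mxE -expr2 sqr_ge0.
  rewrite mxE lt0r (sumr_ge0 _ (fun l _ => sq_ge0 l)) andbT.
  apply: contra Vk => /eqP sum0.
  have /eqP := psumr_eq0P (fun l _ => sq_ge0 l) sum0 (i := k) isT.
  by rewrite mxE -expr2 sqrf_eq0.
have : \det (V^T *m V) != 0.
  by rewrite gram_diag det_diag; apply/prodf_neq0 => i _; rewrite mxE gt_eqF.
by rewrite det_mulmx det_tr mulf_eq0 orbb.
Qed.

Section GsfemPencil.
Variables (R : realType) (N : nat).
Hypothesis N_gt0 : (0 < N)%N.

Local Notation h := (meshh R N).

Lemma meshh_gt0 : 0 < h.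
Proof. by rewrite invr_gt0 ltr0n. Qed.

Lemma meshh_neq0 : h != 0.
Proof. by rewrite gt_eqF ?meshh_gt0. Qed.

Definition lapmx : 'M[R]_(ndof N) := \matrix_(i, j) tridiag 2 (-1) i j.

Lemma tridiagC (d o : R) (i j : 'I_(ndof N)) : tridiag d o i j = tridiag d o j i.
Proof. by rewrite /tridiag eq_sym orbC. Qed.

Lemma lapmx_sym : lapmx^T = lapmx.
Proof. by apply/matrixP => i j; rewrite !mxE tridiagC. Qed.

Lemma lapmx_mul_dirichlet (x : nat -> R) (k : 'I_(ndof N)) : x 0%N = 0 -> x N = 0 ->
  \sum_(l < ndof N) lapmx k l * x l.+1 = 2 * x k.+1 - x k - x k.+2.
Proof.
move=> x0 xN.
have sum_ind p : \sum_(l < ndof N) (p == l :> nat)%:R * x l.+1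
    = if (p < ndof N)%N then x p.+1 else 0.
  rewrite -(@big_ord1_eq _ _ +%R (fun l => x l.+1)) [RHS]big_mkcond /=.
  by apply: eq_bigr => l _; rewrite eq_sym; case: eqP; rewrite ?mul1r ?mul0r.
have lapE l : lapmx k l
    = 2 * (k == l :> nat)%:R - (k.+1 == l :> nat)%:R - (l.+1 == k :> nat)%:R.
  rewrite mxE /tridiag; move: (nat_of_ord k) (nat_of_ord l) => a b.
  by do 3 case: eqP => ? /=; rewrite ?mulr1 ?mulr0; try lia; ring.
under eq_bigr => l _ do rewrite lapE !mulrBl -mulrA.
rewrite !big_split /= !sumrN -mulr_sumr !sum_ind ltn_ord.
have -> : (if (k.+1 < ndof N)%N then x k.+2 else 0) = x k.+2.
  case: ltnP => // kN; suff -> : k.+2 = N by [].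
  by move: (ltn_ord k) kN; rewrite /ndof; lia.
have -> : \sum_(l < ndof N) (l.+1 == k :> nat)%:R * x l.+1 = x k.
  have [k0|k_gt0] := posnP k.
    by rewrite k0 x0 big1 // => l _; rewrite mul0r.
  under eq_bigr => l _ do rewrite -[X in _ == X](prednK k_gt0) eqSS eq_sym.
  by rewrite sum_ind (leq_ltn_trans (leq_pred k)) // prednK.
by ring.
Qed.

Definition theta (i : nat) : R := i.+1%:R * pi / N%:R.

Definition sinmx : 'M[R]_(ndof N) := \matrix_(k, i) sin (k.+1%:R * theta i).

Lemma theta_bounds i : (i < ndof N)%N -> 0 < theta i < pi.
Proof.
move=> iN; have pi0 := @pi_gt0 R; have N0 : (0 : R) < N%:R by rewrite ltr0n.
rewrite divr_gt0 ?mulr_gt0 ?ltr0n //= ltr_pdivrMr // mulrC ltr_pM2l // ltr_nat.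
by move: iN; rewrite /ndof; case: N N_gt0.
Qed.

Lemma stencil_symbol_theta_lt i j : (i < j)%N -> (j < ndof N)%N ->
  stencil_symbol (theta i) < stencil_symbol (theta j).
Proof.
move=> ij jN; have /andP[ti0 tipi] := theta_bounds (ltn_trans ij jN).
have /andP[tj0 tjpi] := theta_bounds jN.
have : theta i < theta j.
  by rewrite ltr_pM2r ?invr_gt0 ?ltr0n // ltr_pM2r ?pi_gt0 // ltr_nat.
rewrite -ltr_cos ?in_itv /= ?(ltW ti0) ?(ltW tj0) ?(ltW tipi) ?(ltW tjpi) //.
by rewrite /stencil_symbol; lra.
Qed.

Lemma lapmx_sinmx :
  lapmx *m sinmx = sinmx *m diag_mx (\row_i stencil_symbol (theta i)).
Proof.
apply/matrixP => k i; rewrite mul_mx_diag [LHS]mxE 3![in RHS]mxE.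
have sinN : sin (N%:R * theta i) = 0.
  rewrite /theta mulrCA mulfV ?pnatr_eq0 -?lt0n // mulr1 mulr_natl -[pi *+ _]add0r.
  by rewrite (alternatingn (@sinDpi R)) sin0 mulr0.
under eq_bigr => l _ do rewrite [sinmx l i]mxE.
rewrite (lapmx_mul_dirichlet (x := fun m => sin (m%:R * theta i))) /= ?mul0r ?sin0 //.
set t := theta i; rewrite /stencil_symbol.
have -> : k%:R * t = k.+1%:R * t - t by rewrite -natr1; ring.
have -> : k.+2%:R * t = k.+1%:R * t + t by rewrite -[k.+2]addn1 natrD mulrDl mul1r.
rewrite sinB sinD; ring.
Qed.

Lemma det_sinmx_neq0 : \det sinmx != 0.
Proof.
apply: det_neq0_of_orthogonal.
  apply: sym_eigvec_orthogonal lapmx_sym lapmx_sinmx _ => i j eq_ij.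
  have [ij|ji|/val_inj //] := ltngtP i j.
    by have := stencil_symbol_theta_lt ij (ltn_ord j); rewrite eq_ij ltxx.
  by have := stencil_symbol_theta_lt ji (ltn_ord i); rewrite eq_ij ltxx.
move=> i; have n0 : (0 < ndof N)%N by apply: leq_ltn_trans (ltn_ord i).
exists (Ordinal n0); rewrite mxE mul1r gt_eqF //.
by apply: sin_gt0_pi; apply: theta_bounds.
Qed.

Lemma KmxE : Kmx R N = h^-1 *: lapmx.
Proof. by apply/matrixP => i j; rewrite !mxE. Qed.

Lemma MmxE : Mmx R N = h *: (1%:M - 6^-1 *: lapmx).
Proof.
apply/matrixP => i j; rewrite !mxE /tridiag -val_eqE /=.
by case: eqP => _; [|case: ifP => _]; rewrite ?mulr1n ?mulr0n; field.
Qed.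

Lemma jump_gram (c : R) :
  \matrix_(k, l) \sum_(m < ndof N) c * jump R m l * jump R m k
    = (c / h ^+ 2) *: (lapmx *m lapmx).
Proof.
apply/matrixP => k l; rewrite !mxE mulr_sumr; apply: eq_bigr => m _.
have h0 := meshh_neq0.
by rewrite /jump [tridiag _ _ m k]tridiagC !mxE; field.
Qed.

Lemma Agsfem_sinmx : Agsfem R N *m sinmx
  = sinmx *m diag_mx (\row_i (h^-1 * stiff_symbol (stencil_symbol (theta i)))).
Proof.
have h0 := meshh_neq0.
have -> : Agsfem R N = 0%:M + h^-1 *: lapmx + (- (12 * h)^-1) *: (lapmx *m lapmx).
  rewrite /Agsfem KmxE /Smx jump_gram.
  by apply/matrixP => k l; rewrite !mxE /etaK; field.
rewrite (quad_mx_diag _ _ _ lapmx_sinmx); congr (_ *m diag_mx _).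
by apply/matrixP => ? i; rewrite !mxE /stiff_symbol; field.
Qed.

Lemma Bgsfem_sinmx : Bgsfem R N *m sinmx
  = sinmx *m diag_mx (\row_i (h * mass_symbol (stencil_symbol (theta i)))).
Proof.
have h0 := meshh_neq0.
have -> : Bgsfem R N = h%:M + (- h / 6) *: lapmx + (h / 360) *: (lapmx *m lapmx).
  rewrite /Bgsfem MmxE /Sgmx jump_gram.
  by apply/matrixP => k l; rewrite !mxE /etaM; field.
rewrite (quad_mx_diag _ _ _ lapmx_sinmx); congr (_ *m diag_mx _).
by apply/matrixP => ? i; rewrite !mxE /mass_symbol; field.
Qed.

Definition gsfem_eig (i : nat) : R := gsfem_symbol (stencil_symbol (theta i)) / h ^+ 2.

Lemma gsfem_eig_le i j : (i <= j)%N -> (j < ndof N)%N -> gsfem_eig i <= gsfem_eig j.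
Proof.
rewrite leq_eqVlt => /orP[/eqP-> // | ij] jN.
have /andP[mi0 _] := stencil_symbol_range (theta i).
have /andP[_ mj4] := stencil_symbol_range (theta j).
rewrite ler_pM2r ?invr_gt0 ?exprn_gt0 ?meshh_gt0 // gsfem_symbol_le //; last by lra.
exact/ltW/stencil_symbol_theta_lt.
Qed.

Lemma gsfem_charpolyE : gsfem_charpoly R N =
  (\prod_(i < ndof N) - (h * mass_symbol (stencil_symbol (theta i))))
    *: \prod_(i < ndof N) ('X - (gsfem_eig i)%:P).
Proof.
rewrite /gsfem_charpoly (det_pencil_diag det_sinmx_neq0 Agsfem_sinmx Bgsfem_sinmx).
rewrite -scaler_prod; apply: eq_bigr => i _.
have mD := mass_symbol_stencil_gt0 (theta i).
have h0 := meshh_neq0.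
have -> : h^-1 * stiff_symbol (stencil_symbol (theta i))
    = gsfem_eig i * (h * mass_symbol (stencil_symbol (theta i))).
  by rewrite /gsfem_eig /gsfem_symbol; field; rewrite h0 gt_eqF.
by rewrite polyCM -mul_polyC polyCN; ring.
Qed.

Lemma gsfem_sorted : gsfem_sorted_eigenvalues N (mkseq gsfem_eig (ndof N)).
Proof.
have prodE : \prod_(x <- mkseq gsfem_eig (ndof N)) ('X - x%:P)
    = \prod_(i < ndof N) ('X - (gsfem_eig i)%:P).
  by rewrite big_map -(big_mkord xpredT (fun i => 'X - (gsfem_eig i)%:P)) /index_iota subn0.
have monic_prod : \prod_(x <- mkseq gsfem_eig (ndof N)) ('X - x%:P) \is monic.
  exact: monic_prod_XsubC.
have c_neq0 : \prod_(i < ndof N) - (h * mass_symbol (stencil_symbol (theta i))) != 0.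
  apply/prodf_neq0 => i _.
  by rewrite oppr_eq0 mulf_neq0 ?meshh_neq0 ?gt_eqF ?mass_symbol_stencil_gt0.
rewrite /gsfem_sorted_eigenvalues gsfem_charpolyE -prodE lead_coefZ (monicP monic_prod) mulr1.
split => //; first by rewrite size_mkseq.
  apply: (@homo_sorted_in _ _ [pred i | (i < ndof N)%N] _ leq).
  - by move=> i j; rewrite !inE => _ jN ij; apply: gsfem_eig_le.
  - by apply/allP => i; rewrite mem_iota.
  - exact: iota_sorted.
by rewrite scale_poly_eq0 negb_or c_neq0 monic_neq0.
Qed.

Lemma gsfem_eig_rel_error j : (1 <= j <= N.-1)%N ->
  `|gsfem_eig j.-1 - exact_eig R j| / exact_eig R j
    < (j%:R * pi * h) ^+ 6 / 3024.
Proof.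
move=> /andP[j1 jN]; set t := theta j.-1.
have tE : t = j%:R * pi * h by rewrite /t /theta prednK.
have /andP[t0 tpi] : 0 < t < pi by apply: theta_bounds; rewrite /ndof; lia.
have t16 := le_trans (ltW tpi) (pi_le_16_5 R).
have h2 : 0 < h ^+ 2 by rewrite exprn_gt0 ?meshh_gt0.
have T0 : 0 < t ^+ 2 by rewrite exprn_gt0.
have -> : exact_eig R j = t ^+ 2 / h ^+ 2.
  by rewrite tE /exact_eig exprMn mulrK ?unitfE ?gt_eqF // exprMn.
have hi : 0 <= (h ^+ 2)^-1 by rewrite invr_ge0 ltW.
rewrite -tE /gsfem_eig -/t -mulrBl normrM (ger0_norm hi).
set e := `|_|; have -> : e * (h ^+ 2)^-1 / (t ^+ 2 / h ^+ 2) = e / t ^+ 2.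
  by field; rewrite (gt_eqF t0) meshh_neq0.
by rewrite ltr_pdivrMr // mulrAC -exprD; apply: gsfem_symbol_error.
Qed.

End GsfemPencil.

Unset Implicit Arguments.
Theorem theorem1 (R : realType) (N : nat) (HN : (2 <= N)%N) :
  exists s : seq R, gsfem_sorted_eigenvalues N s /\
    forall j : nat, (1 <= j <= N.-1)%N ->
      `|s`_j.-1 - exact_eig R j| / exact_eig R j
        < (j%:R * pi * meshh R N) ^+ 6 / 3024.
Proof.
have N_gt0 : (0 < N)%N := ltnW HN.
exists (mkseq (gsfem_eig R N) (ndof N)); split; first exact: gsfem_sorted.
move=> j jN; rewrite nth_mkseq; first exact: gsfem_eig_rel_error.
by case/andP: jN; rewrite /ndof; lia.
Qed.
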